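(* Let $T$ be a tree on $n$ vertices, with vertex set $\{1,\dots,n\}$, and fix vertices $r$ and $a$ of $T$ (not necessarily distinct). Then $$0\le 2\sum_{b=1}^n d_{r,P_{a,b}}\le n(n-1).$$ The upper bound is achieved if and only if $T$ is a path on $n$ vertices and $r$ and $a$ are its two end vertices; the lower bound is achieved if and only if $r=a$.
   Context: $P_{a,b}$ denotes the unique path in $T$ between $a$ and $b$ (when $a=b$ it is the single vertex $a$). $d_{r,P_{a,b}}$ is the distance in $T$ from $r$ to the vertex of $P_{a,b}$ closest to $r$. *)

From mathcomp Require Import all_boot.
Set Implicit Arguments. Unset Strict Implicit. Unset Printing Implicit Defensive.

Section Defs.
Variable T : finType.
Implicit Types (e : rel T) (x y r a b v : T).

(* A simple graph on T is a symmetric irreflexive relation e.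
   A tree: connected and acyclic (no cycle on >= 3 distinct vertices). *)
Definition connected_graph e : Prop := forall x y, connect e x y.
Definition acyclic_graph e : Prop :=
  forall p : seq T, uniq p -> 2 < size p -> ~~ cycle e p.
Definition is_tree e : Prop := connected_graph e /\ acyclic_graph e.

Definition walk e x y (p : seq T) : bool := path e x p && (last x p == y).

(* graph distance: least k such that a walk of length k from x to y exists
   (walks of length < #|T| suffice in a connected graph) *)
Definition dist e x y : nat :=
  find (fun k => [exists p : k.-tuple T, walk e x y p]) (iota 0 #|T|).

(* vertex set of P_{a,b}: vertices on a simple path (no repeated vertex)
   from a to b; in a tree this path is unique *)
Definition tree_path e a b : {set T} :=
  [set v | [exists k : 'I_#|T|, exists p : k.-tuple T,
             walk e a b p && uniq (a :: p) && (v \in a :: p)]].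

Definition dist_to_path e r a b : nat :=
  \big[minn/#|T|]_(v in tree_path e a b) dist e r v.

Definition path_graph_with_ends e r a : Prop :=
  exists s : seq T,
    [/\ uniq (r :: s), size (r :: s) = #|T|, last r s = a &
      forall x y, e x y <->
        exists i, i.+1 < size (r :: s) /\
          ((nth r (r :: s) i = x /\ nth r (r :: s) i.+1 = y) \/
           (nth r (r :: s) i = y /\ nth r (r :: s) i.+1 = x))].
End Defs.

(* Let k = d(r, a) and fix a shortest path r = v_0, ..., v_k = a. Since a and
   b both lie on P_{a,b}, d_{r,P_{a,b}} <= min (d(r, a), d(r, b)), which is i
   for b = v_i and at most k otherwise. Summing over b bounds the doubled sum
   by k(k+1) + 2(n-k-1)k <= n(n-1), with equality only for k = n - 1. In that
   case the shortest path visits every vertex, and as an edge changes the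
   distance to r by at most one, every edge joins consecutive vertices of it.
   Conversely, on the path r ... a the position of b bounds the distance from
   r to every vertex of P_{a,b}: a simple path from a reaching a vertex before
   b has already passed through b. These positions sum to n(n-1)/2.
   Finally d_{r,P_{a,a}} = d(r, a), which vanishes iff r = a. *)

From mathcomp Require Import all_boot order zify.
Set Implicit Arguments. Unset Strict Implicit. Unset Printing Implicit Defensive.
Import Order.TTheory.

Lemma uniq_cons_size_lt_card (T : finType) (x : T) (s : seq T) :
  uniq (x :: s) -> size s < #|T|.
Proof. by move/card_uniqP => /= <-; exact: max_card. Qed.

Lemma mem_uniq_size_card (T : finType) (s : seq T) :
  uniq s -> size s = #|T| -> forall v, v \in s.
Proof.
move=> us size_s v; case: (boolP (v \in s)) => // vNs.
by have := @uniq_cons_size_lt_card T v s; rewrite /= vNs us size_s ltnn; apply.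
Qed.

Lemma sum_index_uniq (T : eqType) (s : seq T) :
  uniq s -> \sum_(x <- s) index x s = \sum_(i < size s) i.
Proof.
case: s => [|x0 s] us; first by rewrite big_nil big_ord0.
by rewrite (big_nth x0) big_mkord; apply: eq_bigr => i _; rewrite index_uniq.
Qed.

Lemma double_sum_ord m : 2 * \sum_(i < m) i = m * (m - 1).
Proof. by rewrite -(big_mkord xpredT id) bin2_sum -mul_bin_diag bin1 subn1. Qed.

Lemma double_sum_index_else (T : finType) (s : seq T) k :
  uniq s -> size s = k.+1 ->
  2 * \sum_(b : T) (if b \in s then index b s else k)
    = k.+1 * k + 2 * ((#|T| - k.+1) * k).
Proof.
move=> us size_s; rewrite (bigID (mem s)) /= mulnDr.
rewrite (eq_bigr (fun b => index b s)) => [|b ->//].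
rewrite [in X in _ + 2 * X](eq_bigr (fun=> k)); last by move=> b /negbTE ->.
rewrite -big_uniq // sum_index_uniq // double_sum_ord size_s subn1 sum_nat_const.
congr (_ + 2 * (_ * _)).
by rewrite -(cardC (mem s)) (card_uniqP us) size_s addKn.
Qed.

Lemma geodesic_count_leqif k N : k < N ->
  k.+1 * k + 2 * ((N - k.+1) * k) <= N * (N - 1) ?= iff (N == k.+1).
Proof.
move/subnK <-; rewrite addnK; split; first nia.
apply/eqP/eqP; nia.
Qed.

Section Distance.
Variables (T : finType) (e : rel T).
Implicit Types (x y u v : T) (p : seq T).

Lemma dist_le_card x y : dist e x y <= #|T|.
Proof. by apply: leq_trans (find_size _ _) _; rewrite size_iota. Qed.

Lemma dist_le_walk x y p : walk e x y p -> dist e x y <= size p.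
Proof.
move=> xpy; have [p_small|p_big] := ltnP (size p) #|T|; last first.
  exact: leq_trans (dist_le_card x y) p_big.
rewrite leqNgt; apply/negP => /(before_find 0); rewrite nth_iota // add0n.
by move/negbT/existsPn/(_ (in_tuple p)); rewrite xpy.
Qed.

Lemma dist_refl x : dist e x x = 0.
Proof. by apply/eqP; rewrite -leqn0 (@dist_le_walk x x [::]) // /walk /= eqxx. Qed.

Lemma walk_shorten x y p : walk e x y p ->
  exists q, [/\ walk e x y q, uniq (x :: q) & size q <= size p].
Proof.
case/andP=> xp /eqP <-; case: (shortenP xp) => q xq uxq sub_qp; exists q; split=> //.
  by rewrite /walk xq eqxx.
by case/andP: uxq => _ /uniq_leq_size; apply.
Qed.

Hypothesis e_conn : connected_graph e.

Lemma shortest_walk x y :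
  exists p, [/\ walk e x y p, uniq (x :: p) & size p = dist e x y].
Proof.
pose P k := [exists p : k.-tuple T, walk e x y p].
have /connectP[p0 xp0 y_def] := e_conn x y.
have /walk_shorten[q0 [xq0y /uniq_cons_size_lt_card q0_small _]] : walk e x y p0.
  by rewrite /walk xp0 y_def eqxx.
have hasP : has P (iota 0 #|T|).
  apply/hasP; exists (size q0); rewrite ?mem_iota //.
  by apply/existsP; exists (in_tuple q0).
have := nth_find 0 hasP; rewrite -/(dist e x y) nth_iota ?add0n; last first.
  by rewrite -(size_iota 0 #|T|) -has_find.
case/existsP=> t /walk_shorten[q [xqy uq]]; rewrite size_tuple => short_q.
by exists q; split=> //; apply/eqP; rewrite eqn_leq short_q dist_le_walk.
Qed.

Lemma dist_lt_card x y : dist e x y < #|T|.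
Proof. by have [p [_ /uniq_cons_size_lt_card + <-]] := shortest_walk x y. Qed.

Lemma dist_eq0 x y : (dist e x y == 0) = (x == y).
Proof.
apply/eqP/eqP=> [|<-]; last exact: dist_refl.
by have [[|? ?] [/andP[_ /eqP <-] _ <-]] := shortest_walk x y.
Qed.

Lemma dist_edge x u v : e u v -> dist e x v <= (dist e x u).+1.
Proof.
move=> euv; have [p [/andP[xp /eqP xpu] _ <-]] := shortest_walk x u.
rewrite -(size_rcons p v); apply: dist_le_walk.
by rewrite /walk rcons_path xp xpu euv last_rcons eqxx.
Qed.

Lemma dist_geodesic_prefix x y p1 p2 : walk e x y (p1 ++ p2) ->
  size (p1 ++ p2) = dist e x y -> dist e x (last x p1) = size p1.
Proof.
case/andP; rewrite cat_path last_cat => /andP[xp1 p2_path] p2y geo.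
have xp1_walk : walk e x (last x p1) p1 by rewrite /walk xp1 eqxx.
apply/eqP; rewrite eqn_leq dist_le_walk //=.
have [w [/andP[xw /eqP xwz] _ <-]] := shortest_walk x (last x p1).
have: dist e x y <= size (w ++ p2).
  by rewrite dist_le_walk // /walk cat_path xw xwz p2_path last_cat xwz.
by rewrite -geo !size_cat leq_add2r.
Qed.

Lemma dist_geodesic_index x y p : walk e x y p -> uniq (x :: p) ->
  size p = dist e x y -> {in x :: p, forall v, dist e x v = index v (x :: p)}.
Proof.
move=> xpy uxp geo v xpv.
case/splitPl: xpv xpy uxp geo => p1 p2 <- xpy uxp geo.
rewrite (dist_geodesic_prefix xpy geo) -cat_cons index_cat mem_last.
by rewrite (last_nth x) index_uniq // (subseq_uniq (prefix_subseq _ p2)).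
Qed.

Lemma spanning_geodesic_path_graph x y p :
  symmetric e -> irreflexive e -> walk e x y p -> uniq (x :: p) ->
  size p = dist e x y -> size (x :: p) = #|T| -> path_graph_with_ends e x y.
Proof.
move=> e_sym e_irr xpy uxp geo size_xp; set s := x :: p.
have s_all := mem_uniq_size_card uxp size_xp.
have index_inj : injective (index^~ s).
  by move=> u v uv; rewrite -(nth_index x (s_all u)) uv nth_index.
have dist_index v : dist e x v = index v s := dist_geodesic_index xpy uxp geo (s_all v).
have consecutive u v : index v s = (index u s).+1 ->
    exists2 i, i.+1 < size s & nth x s i = u /\ nth x s i.+1 = v.
  by move=> uv; exists (index u s); rewrite -uv ?index_mem ?nth_index.
exists p; split=> //; first by case/andP: xpy => _ /eqP.
move=> u v; split=> [euv|[i [lt_i [[<- <-]|[<- <-]]]]]; last first.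
- by case/andP: xpy => /(pathP x) xp _; rewrite e_sym; exact: xp.
- by case/andP: xpy => /(pathP x) xp _; exact: xp.
have := dist_edge x euv; rewrite e_sym in euv; have := dist_edge x euv.
rewrite !dist_index.
case: (ltngtP (index u s) (index v s)) => [lt_uv|lt_vu|/index_inj uv].
- move=> _ le_vu; have [|i lt_i uv] := consecutive u v; first lia.
  by exists i; split; [|left].
- move=> le_uv _; have [|i lt_i vu] := consecutive v u; first lia.
  by exists i; split; [|right].
- by rewrite uv e_irr in euv.
Qed.

End Distance.

Section DistToPath.
Variables (T : finType) (e : rel T).
Implicit Types (r a b v : T).

Lemma tree_pathP a b v :
  reflect (exists q, [/\ walk e a b q, uniq (a :: q) & v \in a :: q])
          (v \in tree_path e a b).
Proof.
rewrite inE; apply: (iffP existsP) => [[k /existsP[q /andP[/andP[abq uaq] vq]]]|].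
  by exists q.
case=> q [abq uaq vq]; exists (Ordinal (uniq_cons_size_lt_card uaq)).
by apply/existsP; exists (in_tuple q); rewrite abq uaq vq.
Qed.

Lemma tree_path_self a v : v \in tree_path e a a -> v = a.
Proof.
case/tree_pathP=> q [/andP[_ /eqP qa]]; case: q qa => [_ _|y q /= qa].
  by rewrite inE => /eqP.
by rewrite /= -{1}qa mem_last.
Qed.

Lemma dist_to_path_le r a b v :
  v \in tree_path e a b -> dist_to_path e r a b <= dist e r v.
Proof. by move=> v_ab; rewrite /dist_to_path -minEnat -leEnat; exact: bigmin_le_cond. Qed.

Lemma leq_dist_to_path r a b c : c <= #|T| ->
  (forall v, v \in tree_path e a b -> c <= dist e r v) -> c <= dist_to_path e r a b.
Proof.
by move=> c_le c_dist; rewrite /dist_to_path -minEnat -leEnat; exact/bigmin_geP.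
Qed.

Hypothesis e_conn : connected_graph e.

Lemma mem_tree_path_ends a b : (a \in tree_path e a b) && (b \in tree_path e a b).
Proof.
have [p [abp uap _]] := shortest_walk e_conn a b.
apply/andP; split; apply/tree_pathP; exists p; split; rewrite ?mem_head //.
by case/andP: abp => _ /eqP <-; rewrite mem_last.
Qed.

Lemma dist_to_path_le_ends r a b :
  dist_to_path e r a b <= minn (dist e r a) (dist e r b).
Proof.
by case/andP: (mem_tree_path_ends a b) => a_ab b_ab; rewrite leq_min !dist_to_path_le.
Qed.

Lemma dist_to_path_self r a : dist_to_path e r a a = dist e r a.
Proof.
apply/eqP; rewrite eqn_leq (leq_trans (dist_to_path_le_ends r a a)) ?geq_minl //.
by apply: leq_dist_to_path (dist_le_card _ _ _) _ => v /tree_path_self ->.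
Qed.

Lemma double_sum_dist_to_path_le r a (k := dist e r a) :
  2 * \sum_b dist_to_path e r a b <= k.+1 * k + 2 * ((#|T| - k.+1) * k).
Proof.
have [p [rpa urp geo]] := shortest_walk e_conn r a.
rewrite -(double_sum_index_else urp) ?leq_pmul2l //; last by rewrite /= geo.
apply: leq_sum => b _; have := dist_to_path_le_ends r a b; rewrite leq_min.
case/andP=> le_a le_b; case: ifP => // b_rp.
by rewrite -(dist_geodesic_index e_conn rpa urp geo b_rp).
Qed.

End DistToPath.

Section StepFunction.
Variables (T : eqType) (e : rel T) (f : T -> nat).
Hypotheses (e_sym : symmetric e) (f_step : forall x y, e x y -> f y <= (f x).+1).

Lemma path_last_le x p : path e x p -> f (last x p) <= f x + size p.
Proof.
elim: p x => [|y p IHp] x /=; first by rewrite addn0.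
by case/andP=> /f_step fy /IHp; rewrite addnS; lia.
Qed.

Lemma path_hits_level x p j : path e x p -> f (last x p) <= j <= f x ->
  exists2 w, w \in x :: p & f w = j.
Proof.
elim: p x => [|y p IHp] x /=.
  move=> _ /andP[le_xj le_jx]; exists x; rewrite ?mem_head //.
  by apply/eqP; rewrite eqn_leq le_xj le_jx.
case/andP=> exy yp /andP[le_last le_x].
have [le_jx|lt_jx] := leqP (f x) j.
  by exists x; rewrite ?mem_head //; apply/eqP; rewrite eqn_leq le_x le_jx.
have fx_le : f x <= (f y).+1 by apply: f_step; rewrite e_sym.
have [|w wp fw] := IHp y yp; first by rewrite le_last; lia.
by exists w; rewrite // in_cons wp orbT.
Qed.

End StepFunction.

Section PathGraph.
Variables (T : finType) (e : rel T) (r a : T) (s : seq T).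
Hypotheses (e_conn : connected_graph e) (e_sym : symmetric e).
Hypotheses (urs : uniq (r :: s)) (size_rs : size (r :: s) = #|T|).
Hypothesis last_rs : last r s = a.
Hypothesis e_consecutive : forall x y, e x y <->
  exists i, i.+1 < size (r :: s) /\
    ((nth r (r :: s) i = x /\ nth r (r :: s) i.+1 = y) \/
     (nth r (r :: s) i = y /\ nth r (r :: s) i.+1 = x)).

Let pos v := index v (r :: s).

Let mem_rs : forall v, v \in r :: s := mem_uniq_size_card urs size_rs.

Lemma pos_inj : injective pos.
Proof.
by move=> u v uv; rewrite -(nth_index r (mem_rs u)) -[index u _]/(pos u) uv nth_index.
Qed.

Lemma pos_lt_card v : pos v < #|T|.
Proof. by rewrite -size_rs index_mem. Qed.

Lemma pos_le_last v : pos v <= pos a.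
Proof. by rewrite /pos -last_rs (last_nth r) index_uniq // -ltnS index_mem. Qed.

Lemma pos_step x y : e x y -> pos y <= (pos x).+1.
Proof.
case/e_consecutive=> i [lt_i [[<- <-]|[<- <-]]].
  by rewrite /pos !index_uniq ?(ltnW lt_i).
by rewrite /pos !index_uniq ?(ltnW lt_i) // leqW.
Qed.

Lemma pos_le_dist v : pos v <= dist e r v.
Proof.
have [w [/andP[rw /eqP <-] _ <-]] := shortest_walk e_conn r v.
by have := path_last_le pos_step rw; rewrite /pos /= eqxx.
Qed.

Lemma pos_le_dist_to_path b : pos b <= dist_to_path e r a b.
Proof.
apply: leq_dist_to_path (ltnW (pos_lt_card b)) _ => v.
case/tree_pathP=> q [/andP[aqb /eqP qb] uaq vq]; apply: leq_trans (pos_le_dist v).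
rewrite leqNgt; apply/negP => lt_vb.
case/splitPl: vq aqb qb uaq => q1 q2 q1v.
rewrite cat_path last_cat q1v => /andP[aq1 _] q2b.
have [|w wq1 /pos_inj wb] := path_hits_level e_sym pos_step (j := pos b) aq1.
  by rewrite q1v (ltnW lt_vb) pos_le_last.
have b_q2 : b \in q2.
  have := mem_last v q2; rewrite q2b in_cons => /orP[/eqP bv|//].
  by rewrite bv ltnn in lt_vb.
by rewrite -cat_cons cat_uniq => /and3P[_ /hasPn/(_ b b_q2)]; rewrite -wb wq1.
Qed.

Lemma double_sum_pos : 2 * \sum_v pos v = #|T| * (#|T| - 1).
Proof.
have -> : \sum_v pos v = \sum_(v <- r :: s) pos v.
  by rewrite [RHS]big_uniq //; apply: eq_bigl => v; rewrite mem_rs.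
by rewrite /pos sum_index_uniq // double_sum_ord size_rs.
Qed.

Lemma path_graph_double_sum_dist_to_path_ge :
  #|T| * (#|T| - 1) <= 2 * \sum_b dist_to_path e r a b.
Proof.
rewrite -double_sum_pos leq_pmul2l //; apply: leq_sum => b _.
exact: pos_le_dist_to_path.
Qed.

End PathGraph.

Theorem lemma2p7 (n : nat) (e : rel 'I_n)
  (e_sym : symmetric e) (e_irr : irreflexive e) (e_tree : is_tree e)
  (r a : 'I_n) :
  [/\ 0 <= 2 * \sum_(b < n) dist_to_path e r a b,
      2 * \sum_(b < n) dist_to_path e r a b <= n * (n - 1),
      (2 * \sum_(b < n) dist_to_path e r a b = n * (n - 1)
         <-> path_graph_with_ends e r a)
    & (2 * \sum_(b < n) dist_to_path e r a b = 0 <-> r = a)].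
Proof.
have [e_conn _] := e_tree.
set S := \sum_(b < n) _.
have S_le := double_sum_dist_to_path_le e_conn r a.
have count_le := geodesic_count_leqif (dist_lt_card e_conn r a).
rewrite card_ord -/S in S_le count_le.
split=> //; first exact: leq_trans S_le count_le.
- split=> [S_max|[s [urs size_rs last_rs e_s]]].
    have [p [rpa urp geo]] := shortest_walk e_conn r a.
    apply: (spanning_geodesic_path_graph e_conn e_sym e_irr rpa urp geo).
    rewrite /= geo card_ord; apply/esym/eqP; rewrite -count_le.2 eqn_leq count_le.1.
    by rewrite -S_max.
  apply/eqP; rewrite eqn_leq (leq_trans S_le count_le).
  have := path_graph_double_sum_dist_to_path_ge e_conn e_sym urs size_rs last_rs e_s.
  by rewrite card_ord.
- split=> [S0|ra].
    have : dist_to_path e r a a <= S by rewrite /S (bigD1 a) //= leq_addr.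
    rewrite dist_to_path_self // => le_S; apply/eqP; rewrite -(dist_eq0 e_conn); lia.
  rewrite /S -ra big1 // => b _; apply/eqP.
  by have := dist_to_path_le_ends e_conn r r b; rewrite dist_refl min0n leqn0.
Qed.
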